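(* Let $\ell\ge1$ and $V=\prod_{j=\ell,\dots,2,1}(c_1x^jy^jc_2)^2$. If $C$ is an accepting computation of $V$ and at some point during $C$ the queue contains two full $x$-blocks (respectively, two full $y$-blocks), then at some later point during $C$ the queue contains two full $y$-blocks (respectively, two full $x$-blocks).
   Context: Queue automaton: a configuration is written $Q\,\|\,x$ ($Q$ = queue contents, $x$ = remaining input); a step from $Q\,\|\,\sigma x$ ($\sigma$ a symbol) goes either to $Q\sigma\,\|\,x$ (push the input symbol) or, if $Q=\sigma Q'$, to $Q'\,\|\,x$ (the input symbol is matched against the leftmost queue symbol, which is popped; that queue symbol was pushed from an earlier input position and the two occurrences are said to be matched). An accepting computation of $w$ is a computation $\varepsilon\,\|\,w\vdash^*\varepsilon\,\|\,\varepsilon$ ($\varepsilon$ the empty string). Here $c_1,c_2,x,y$ are four distinct symbols and $V=v_\ell v_\ell v_{\ell-1}v_{\ell-1}\cdots v_1v_1$ with $v_j=c_1x^jy^jc_2$. Each displayed subword $x^j$ of $V$ is an $x$-block and each displayed $y^j$ a $y$-block. At a given point of a computation, the queue contains a full $x$-block (resp. $y$-block) if the entire block $x^j$ (resp. $y^j$) of $V$ has been pushed onto the queue, with none of its symbols matched when read, and none of its symbols has yet been popped. *)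

From HB Require Import structures.
From mathcomp Require Import all_boot.
Set Implicit Arguments. Unset Strict Implicit. Unset Printing Implicit Defensive.

Inductive sym := c1 | c2 | sx | sy.
Definition sym_eqb (a b : sym) : bool :=
  match a, b with
  | c1, c1 | c2, c2 | sx, sx | sy, sy => true | _, _ => false end.
Lemma sym_eqP : Equality.axiom sym_eqb.
Proof. by case; case; constructor. Qed.
HB.instance Definition _ := hasDecEq.Build sym sym_eqP.

(* Each letter of V is tagged with the block it belongs to:
   Some (j, c) means it lies in the x-block (if the letter is x) or the
   y-block (if the letter is y) of the c-th copy (c = 0 or 1) of v_j. *)
Definition tletter := (sym * option (nat * nat))%type.

Definition vt (j c : nat) : seq tletter :=
  [:: (c1, None)] ++ nseq j (sx, Some (j, c)) ++ nseq j (sy, Some (j, c))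
  ++ [:: (c2, None)].

Definition VT (l : nat) : seq tletter :=
  flatten [seq vt j 0 ++ vt j 1 | j <- rev (iota 1 l)].

Definition V (l : nat) : seq sym := map fst (VT l).

(* The queue is recorded as the list of input positions
   whose symbols were pushed (the queue word is the list of these symbols).
   At step k (reading w_k), choice true = push w_k, false = match w_k against
   the leftmost queue symbol and pop it.  None = the step is impossible. *)
Definition step (w : seq sym) (Q : option (seq nat)) (k : nat) (b : bool)
  : option (seq nat) :=
  match Q with
  | None => None
  | Some q =>
      if b then Some (rcons q k)
      else match q with
           | p :: q' => if nth c1 w p == nth c1 w k then Some q' else None
           | [::] => None
           end
  end.

Fixpoint queue_at (w : seq sym) (cs : seq bool) (k : nat) : option (seq nat) :=
  match k with
  | 0 => Some [::]
  | k'.+1 => step w (queue_at w cs k') k' (nth false cs k')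
  end.

Definition accepting (w : seq sym) (cs : seq bool) : Prop :=
  size cs = size w /\ queue_at w cs (size w) = Some [::].

Definition full_block (l : nat) (q : seq nat) (kind : sym) (b : nat * nat) : Prop :=
  (exists i, i < size (VT l) /\ nth (c1, None) (VT l) i = (kind, Some b)) /\
  (forall i, i < size (VT l) -> nth (c1, None) (VT l) i = (kind, Some b) -> i \in q).

Definition two_full (l : nat) (q : seq nat) (kind : sym) : Prop :=
  exists b1 b2, b1 <> b2 /\ full_block l q kind b1 /\ full_block l q kind b2.

From mathcomp Require Import all_boot zify.
Set Implicit Arguments. Unset Strict Implicit. Unset Printing Implicit Defensive.

(* Let B1 and B2 be the two full x-blocks in the queue, B1 before B2 in V.  The queue is
   FIFO, so the letters of B1 are popped by consecutive pops, later those of B2, and each of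
   these pops reads an x lying after B2 in V.  A copy of some v_j read while B1 is popped
   comes after B2, hence is shorter than B1; so the first and last pops of B1 read x's of
   different copies, and the y-block between them, read during these pops, is pushed.  The
   same holds for B2.  Both y-blocks are pushed after the last letter of B2, so they are in
   the queue when that letter is popped.  The case of y-blocks is symmetric. *)

Definition tdef : tletter := (c1, None).

Lemma VT_succ l : VT l.+1 = (vt l.+1 0 ++ vt l.+1 1) ++ VT l.
Proof.
rewrite /VT -(addn1 l) iotaD rev_cat map_cat flatten_cat add1n addn1.
by rewrite /rev /= cats0.
Qed.

Lemma size_vt j c : size (vt j c) = 2 * j + 2.
Proof. rewrite /vt !size_cat !size_nseq /=; lia. Qed.

(* position in V of the first letter of the c-th copy (c = 0, 1) of v_j *)
Fixpoint voff (l j c : nat) : nat :=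
  if l is l'.+1 then
    if j == l then c * (2 * j + 2) else 2 * (2 * l + 2) + voff l' j c
  else 0.

Lemma nth_VT_voff l j c s : 1 <= j <= l -> c < 2 -> s < 2 * j + 2 ->
  voff l j c + s < size (VT l) /\
  nth tdef (VT l) (voff l j c + s) = nth tdef (vt j c) s.
Proof.
elim: l => [|l IH] /= Hj Hc Hs; first lia.
rewrite VT_succ size_cat nth_cat size_cat !size_vt.
case: eqP => [->|Hjl].
- clear IH; rewrite ifT; last nia.
  rewrite nth_cat size_vt; case: c Hc => [|[|//]] _; split; try lia.
  + by rewrite mul0n add0n ifT //; lia.
  + by rewrite mul1n ifF ?addKn //; lia.
- have [IH1 IH2] := IH ltac:(lia) Hc Hs; split; first lia.
  by rewrite ifF; [rewrite -IH2; congr nth | ]; lia.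
Qed.

Lemma VT_voff_decomp l i : i < size (VT l) ->
  exists j c s, [/\ 1 <= j <= l, c < 2, s < 2 * j + 2 & i = voff l j c + s].
Proof.
elim: l i => [|l IH] i //.
rewrite VT_succ size_cat size_cat !size_vt => Hi.
have [Hi0|Hi0] := ltnP i (2 * l.+1 + 2).
  by exists l.+1, 0, i; rewrite /= eqxx; split => //; lia.
have [Hi1|Hi1] := ltnP i (2 * (2 * l.+1 + 2)).
  by exists l.+1, 1, (i - (2 * l.+1 + 2)); rewrite /= eqxx; split => //; lia.
have [j [c [s [Hj Hc Hs Ei]]]] := IH (i - 2 * (2 * l.+1 + 2)) ltac:(lia).
exists j, c, s; rewrite /= ifF; first (split => //; lia).
by apply/eqP; lia.
Qed.

Definition copy_lt (j c j' c' : nat) : Prop := j' < j \/ (j = j' /\ c < c').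

Lemma copy_lt_total j c j' c' : (j, c) <> (j', c') -> copy_lt j c j' c' \/ copy_lt j' c' j c.
Proof.
rewrite /copy_lt => Hne.
have [Ej|Nj] := eqVneq j j'; last lia.
subst j'; have Nc : c <> c' by move=> Ec; apply: Hne; rewrite Ec.
lia.
Qed.

Lemma voff_copy_lt l j c j' c' s : 1 <= j <= l -> 1 <= j' <= l -> c < 2 -> c' < 2 ->
  s < 2 * j + 2 -> copy_lt j c j' c' -> voff l j c + s < voff l j' c'.
Proof.
rewrite /copy_lt; elim: l => [|l IH] /= Hj Hj' Hc Hc' Hs Hlt; first lia.
case: eqP => [Ej|Ej]; case: eqP => [Ej'|Ej'].
- by clear IH; subst; nia.
- by clear IH; nia.
- lia.
- have := IH ltac:(lia) ltac:(lia) Hc Hc' Hs Hlt; lia.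
Qed.

Lemma voff_lt_copy_lt l j c s j' c' s' : 1 <= j <= l -> 1 <= j' <= l -> c < 2 -> c' < 2 ->
  s < 2 * j + 2 -> s' < 2 * j' + 2 -> (j, c) <> (j', c') ->
  voff l j c + s < voff l j' c' + s' -> copy_lt j c j' c'.
Proof.
move=> Hj Hj' Hc Hc' Hs Hs' Hne Hlt; rewrite /copy_lt.
have [Hjj|Hjj|Ejj] := ltngtP j j'; [|by left|subst j'].
  have := @voff_copy_lt l j' c' j c s' Hj' Hj Hc' Hc Hs' ltac:(by left); lia.
have [Hcc|Hcc|Ecc] := ltngtP c c'; [by right| |by subst].
have := @voff_copy_lt l j c' j c s' Hj' Hj Hc' Hc Hs' ltac:(by right); lia.
Qed.

Definition block_sym (k : sym) : bool := (k == sx) || (k == sy).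

Definition bstart (k : sym) (j : nat) : nat := if k is sx then 1 else j.+1.

Lemma nth_vt_block j c k t : block_sym k -> t < j ->
  bstart k j + t < 2 * j + 2 /\ nth tdef (vt j c) (bstart k j + t) = (k, Some (j, c)).
Proof.
case: k => //= _ Ht; rewrite /vt /=.
- by rewrite add1n /= nth_cat size_nseq Ht nth_nseq Ht; split => //; lia.
- rewrite addSn /= nth_cat size_nseq ifF; last lia.
  by rewrite addKn nth_cat size_nseq Ht nth_nseq Ht; split => //; lia.
Qed.

Lemma nth_vt_cases j c s : s < 2 * j + 2 ->
  nth tdef (vt j c) s \in [:: (c1, None); (c2, None)] \/
  exists k t, [/\ block_sym k, t < j & s = bstart k j + t].
Proof.
rewrite /vt; case: s => [|s] Hs; first by left.
rewrite /= nth_cat size_nseq.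
have [Hx|Hx] := ltnP s j; first by right; exists sx, s; split => //; lia.
rewrite nth_cat size_nseq.
have [Hy|Hy] := ltnP (s - j) j.
  by right; exists sy, (s - j); split => //=; lia.
by left; have -> : s - j - j = 0 by lia.
Qed.

Definition bpos (l : nat) (k : sym) (j c t : nat) : nat := voff l j c + bstart k j + t.

Lemma nth_VT_bpos l k j c t : block_sym k -> 1 <= j <= l -> c < 2 -> t < j ->
  bpos l k j c t < size (VT l) /\ nth tdef (VT l) (bpos l k j c t) = (k, Some (j, c)).
Proof.
move=> Hk Hj Hc Ht; have [Hs Hnth] := nth_vt_block c Hk Ht.
by rewrite /bpos -addnA; have [-> ->] := nth_VT_voff Hj Hc Hs.
Qed.

Lemma nth_VT_cases l i : i < size (VT l) ->
  nth tdef (VT l) i \in [:: (c1, None); (c2, None)] \/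
  exists k j c t, [/\ block_sym k, 1 <= j <= l, c < 2, t < j & i = bpos l k j c t].
Proof.
move=> /VT_voff_decomp [j [c [s [Hj Hc Hs ->]]]].
have [_ ->] := nth_VT_voff Hj Hc Hs.
case: (nth_vt_cases c Hs) => [|[k [t [Hk Ht ->]]]]; first by left.
by right; exists k, j, c, t; rewrite /bpos addnA.
Qed.

Lemma VT_tagged l i k b : i < size (VT l) -> nth tdef (VT l) i = (k, Some b) ->
  [/\ block_sym k, 1 <= b.1 <= l, b.2 < 2 & exists2 t, t < b.1 & i = bpos l k b.1 b.2 t].
Proof.
move=> /nth_VT_cases [Hin|[k' [j [c [t [Hk' Hj Hc Ht Ei]]]]]] Hi.
  by move: Hin; rewrite Hi !inE => /orP[] /eqP.
have [_] := nth_VT_bpos Hk' Hj Hc Ht; rewrite -Ei Hi => -[-> ->].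
by split => //; exists t.
Qed.

Lemma bpos_copy_lt l k k' j c t j' c' t' : 1 <= j <= l -> 1 <= j' <= l -> c < 2 -> c' < 2 ->
  t < j -> copy_lt j c j' c' -> bpos l k j c t < bpos l k' j' c' t'.
Proof.
move=> Hj Hj' Hc Hc' Ht Hlt.
have Hs : bstart k j + t < 2 * j + 2 by rewrite /bstart; case: k; lia.
have := voff_copy_lt Hj Hj' Hc Hc' Hs Hlt; rewrite /bpos; lia.
Qed.

Lemma bpos_lt_copy_lt l k k' j c t j' c' t' : 1 <= j <= l -> 1 <= j' <= l -> c < 2 -> c' < 2 ->
  t < j -> t' < j' -> (j, c) <> (j', c') ->
  bpos l k j c t < bpos l k' j' c' t' -> copy_lt j c j' c'.
Proof.
move=> Hj Hj' Hc Hc' Ht Ht' Hne.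
rewrite /bpos -!addnA; apply: voff_lt_copy_lt => //; rewrite /bstart.
- by case: k; lia.
- by case: k'; lia.
Qed.

Definition opposite (k k' : sym) : Prop := (k, k') = (sx, sy) \/ (k, k') = (sy, sx).

Lemma opposite_block_sym k k' : opposite k k' -> [/\ block_sym k, block_sym k' & k != k'].
Proof. by case=> -[-> ->]. Qed.

(* The k'-block in between is that of the earlier copy if k = x, of the later one if k = y. *)
Lemma block_between l k k' jA cA tA jB cB tB : opposite k k' ->
  1 <= jA <= l -> cA < 2 -> tA < jA -> 1 <= jB <= l -> cB < 2 -> tB < jB ->
  (jA, cA) <> (jB, cB) -> bpos l k jA cA tA < bpos l k jB cB tB ->
  exists jY cY, [/\ 1 <= jY <= l, cY < 2 & forall t, t < jY ->
    bpos l k jA cA tA < bpos l k' jY cY t < bpos l k jB cB tB].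
Proof.
move=> Hk HjA HcA HtA HjB HcB HtB Hne Hlt.
have Hp := bpos_lt_copy_lt HjA HjB HcA HcB HtA HtB Hne Hlt.
case: Hk => -[-> ->].
- exists jA, cA; split => // t Ht.
  by have := bpos_copy_lt sy sx tB HjA HjB HcA HcB Ht Hp; rewrite /bpos /=; lia.
- exists jB, cB; split => // t Ht.
  by have := bpos_copy_lt sy sx t HjA HjB HcA HcB HtA Hp; rewrite /bpos /=; lia.
Qed.

Lemma size_V l : size (V l) = size (VT l).
Proof. exact: size_map. Qed.

Lemma nth_V l i : i < size (VT l) -> nth c1 (V l) i = (nth tdef (VT l) i).1.
Proof. by move=> Hi; rewrite /V (nth_map tdef). Qed.

Lemma nth_V_bpos l k j c t : block_sym k -> 1 <= j <= l -> c < 2 -> t < j ->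
  bpos l k j c t < size (V l) /\ nth c1 (V l) (bpos l k j c t) = k.
Proof.
move=> Hk Hj Hc Ht; have [Hlt Hnth] := nth_VT_bpos Hk Hj Hc Ht.
by rewrite size_V nth_V // Hnth.
Qed.

Lemma V_block_sym l i k : i < size (V l) -> block_sym k -> nth c1 (V l) i = k ->
  exists j c t, [/\ 1 <= j <= l, c < 2, t < j & i = bpos l k j c t].
Proof.
rewrite size_V => /[dup] Hi /nth_VT_cases [Hin|[k' [j [c [t [Hk' Hj Hc Ht Ei]]]]]] Hk;
  rewrite nth_V // => Ek.
  by move: Hin Hk; rewrite -Ek !inE => /orP[] /eqP ->.
have [_ Hnth] := nth_VT_bpos Hk' Hj Hc Ht.
by move: Ek; rewrite Ei Hnth /= => Ek; subst k'; exists j, c, t.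
Qed.

Lemma full_block_bpos l q k b : full_block l q k b <->
  [/\ block_sym k, 1 <= b.1 <= l, b.2 < 2 & forall t, t < b.1 -> bpos l k b.1 b.2 t \in q].
Proof.
split.
- case=> -[i [Hi Hnth]] Hall; have [Hk Hj Hc _] := VT_tagged Hi Hnth.
  split=> // t Ht; have [Hlt Hnth'] := nth_VT_bpos Hk Hj Hc Ht.
  by apply: Hall; rewrite // Hnth'; case: (b).
- case: b => j c [/= Hk Hj Hc Hin]; split.
    by exists (bpos l k j c 0); apply: nth_VT_bpos; lia.
  by move=> i Hi /VT_tagged-/(_ Hi) [_ _ _ [t Ht ->]]; apply: Hin.
Qed.

Section QueueRun.
Variables (w : seq sym) (cs : seq bool).

Definition is_push (u : nat) : bool := nth false cs u.

Fixpoint npush (u : nat) : nat := if u is u'.+1 then npush u' + is_push u' else 0.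
Fixpoint npop (u : nat) : nat := if u is u'.+1 then npop u' + ~~ is_push u' else 0.

Definition pushes (u : nat) : seq nat := [seq p <- iota 0 u | is_push p].

Lemma pushes_succ u : pushes u.+1 = pushes u ++ (if is_push u then [:: u] else [::]).
Proof. by rewrite /pushes -addn1 iotaD filter_cat /=. Qed.

Lemma size_pushes u : size (pushes u) = npush u.
Proof. by elim: u => //= u IH; rewrite pushes_succ size_cat IH; case: is_push. Qed.

Lemma nth_pushes u m : m < npush u ->
  let p := nth 0 (pushes u) m in [/\ p < u, is_push p & npush p = m].
Proof.
elim: u => [|u IH] //= Hm; rewrite pushes_succ nth_cat size_pushes.
have [Hlt|Hge] := ltnP m (npush u); first by have [] := IH Hlt; split => //; lia.
move: Hm; case Hu: (is_push u) => /= Hm; last lia.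
have -> : m - npush u = 0 by lia.
by split => //=; lia.
Qed.

Lemma leq_npush u u' : u <= u' -> npush u <= npush u'.
Proof. by move/subnKC <-; elim: (u' - u) => [|d IH]; rewrite ?addn0 ?addnS //=; lia. Qed.

Lemma leq_npop u u' : u <= u' -> npop u <= npop u'.
Proof. by move/subnKC <-; elim: (u' - u) => [|d IH]; rewrite ?addn0 ?addnS //=; lia. Qed.

Lemma npop_leq_sub u u' : u <= u' -> npop u' <= npop u + (u' - u).
Proof.
move/subnKC <-; rewrite addKn.
by elim: (u' - u) => [|d IH]; rewrite ?addn0 ?addnS //=; case: is_push; lia.
Qed.

Lemma npush_lt p u : is_push p -> p < u -> npush p < npush u.
Proof. by move=> Hp /leq_npush /=; rewrite Hp addn1. Qed.

Lemma npop_lt p u : ~~ is_push p -> p < u -> npop p < npop u.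
Proof. by move=> Hp /leq_npop /=; rewrite Hp addn1. Qed.

Lemma ltn_of_npop u u' : npop u < npop u' -> u < u'.
Proof. by move=> H; rewrite ltnNge; apply/negP => /leq_npop; lia. Qed.

Lemma leq_of_npop u u' : ~~ is_push u' -> npop u <= npop u' -> u <= u'.
Proof. by move=> Hp H; rewrite leqNgt; apply/negP => /(npop_lt Hp); lia. Qed.

Lemma npush_inj p p' : is_push p -> is_push p' -> npush p = npush p' -> p = p'.
Proof.
move=> Hp Hp' E; have [H|H|//] := ltngtP p p'.
- by have := npush_lt Hp H; lia.
- by have := npush_lt Hp' H; lia.
Qed.

Lemma queue_at_pushes u q : queue_at w cs u = Some q ->
  npop u <= npush u /\ q = drop (npop u) (pushes u).
Proof.
elim: u q => [|u IH] q /=; first by case=> <-.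
case Eu: (queue_at w cs u) => [q0|] //=.
have [Hle Hq0] := IH q0 Eu.
rewrite pushes_succ -/(is_push u); case Hu: (is_push u) => /=.
- case=> <-; rewrite addn0 addn1 drop_cat size_pushes; split; first lia.
  case: ltnP => H; first by rewrite Hq0 -cats1.
  have -> : npop u = npush u by lia.
  by rewrite Hq0 subnn drop0 drop_oversize ?size_pushes.
- case: q0 Eu Hq0 => [|p q'] // Eu Hq0; case: eqP => // _ [<-].
  have Hlt : npop u < npush u.
    by rewrite ltnNge -size_pushes; apply/negP => H; rewrite drop_oversize in Hq0.
  rewrite addn0 addn1 cats0; split => //.
  by rewrite (drop_nth 0) ?size_pushes // in Hq0; case: Hq0.
Qed.

Lemma mem_queue_at u q p : queue_at w cs u = Some q ->
  (p \in q) = [&& p < u, is_push p & npop u <= npush p].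
Proof.
move=> /queue_at_pushes [Hle ->]; apply/idP/idP.
- case/(nthP 0) => i; rewrite size_drop size_pushes nth_drop => Hi <-.
  have Hi' : npop u + i < npush u by lia.
  by have [-> -> ->] := nth_pushes Hi'; rewrite leq_addr.
- case/and3P => Hpu Hp Hle'.
  apply/(nthP 0); exists (npush p - npop u).
    by rewrite size_drop size_pushes; have := npush_lt Hp Hpu; lia.
  have [_ Hpush Ep] := nth_pushes (npush_lt Hp Hpu).
  by rewrite nth_drop subnKC //; apply: npush_inj.
Qed.

Lemma exists_pop n m : m < npop n -> exists u, [/\ u < n, ~~ is_push u & npop u = m].
Proof.
elim: n => [|n IH] //= Hm.
have [Hlt|Hge] := ltnP m (npop n).
  by have [u [Hu Hpu Em]] := IH Hlt; exists u; split => //; lia.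
by exists n; move: Hm; case: is_push => /= Hm; split => //; lia.
Qed.

Lemma queue_at_None u d : queue_at w cs u = None -> queue_at w cs (u + d) = None.
Proof. by elim: d => [|d IH]; rewrite ?addn0 ?addnS //= => /IH ->. Qed.

Hypothesis accepts : queue_at w cs (size w) = Some [::].

Lemma queue_at_defined u : u <= size w -> exists q, queue_at w cs u = Some q.
Proof.
move=> Hu; case Eu: (queue_at w cs u) => [q|]; first by exists q.
by have := queue_at_None (size w - u) Eu; rewrite subnKC // accepts.
Qed.

Lemma npop_size : npop (size w) = npush (size w).
Proof.
have [Hle Hq] := queue_at_pushes accepts.
by have := congr1 size Hq; rewrite size_drop size_pushes /=; lia.
Qed.

Lemma pop_matches u : u < size w -> ~~ is_push u ->
  exists p, [/\ p < u, is_push p, npush p = npop u & nth c1 w p = nth c1 w u].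
Proof.
move=> Hu Hpu; have [q /=] := queue_at_defined Hu.
case Eu: (queue_at w cs u) => [q0|] //=; rewrite -/(is_push u) (negbTE Hpu).
have [Hle Hq0] := queue_at_pushes Eu.
case: q0 Eu Hq0 => [|p q'] // Eu Hq0; case: eqP => // Hsym _.
have Hlt : npop u < npush u.
  by rewrite ltnNge -size_pushes; apply/negP => H; rewrite drop_oversize in Hq0.
rewrite (drop_nth 0) ?size_pushes // in Hq0; case: Hq0 => Ep _.
by have [] := nth_pushes Hlt; rewrite -Ep; exists p.
Qed.

End QueueRun.

Section QueuedBlocks.
Variables (l : nat) (cs : seq bool) (kd kd' : sym).
Hypothesis kd_opp : opposite kd kd'.
Hypothesis accepts : queue_at (V l) cs (size (V l)) = Some [::].
Variables (k : nat) (q : seq nat).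
Hypothesis k_le : k <= size (V l).
Hypothesis queue_k : queue_at (V l) cs k = Some q.

Let kd_sym : block_sym kd. Proof. by case: (opposite_block_sym kd_opp). Qed.
Let kd'_sym : block_sym kd'. Proof. by case: (opposite_block_sym kd_opp). Qed.
Let kd_neq : kd != kd'. Proof. by case: (opposite_block_sym kd_opp). Qed.

Definition queued (j c : nat) : Prop :=
  [/\ 1 <= j <= l, c < 2 & forall t, t < j -> bpos l kd j c t \in q].

Definition in_block (u j c : nat) : Prop :=
  [/\ 1 <= j <= l, c < 2 & exists2 t, t < j & u = bpos l kd j c t].

Definition base (j c : nat) : nat := npush cs (bpos l kd j c 0).

Lemma queued_pushed j c i : queued j c -> i < j ->
  let p := bpos l kd j c i in
  [/\ p < k, is_push cs p, npop cs k <= npush cs p & npush cs p = base j c + i].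
Proof.
case=> _ _ Hin; elim: i => [|i IH] Hi p.
  by have := Hin 0 Hi; rewrite (mem_queue_at _ queue_k) addn0 => /and3P[].
have := Hin i.+1 Hi; rewrite (mem_queue_at _ queue_k) => /and3P[-> -> ->].
have [_ Hpush _ Ei] := IH (ltnW Hi).
by rewrite /p /bpos addnS /= Hpush Ei addn1 addnS.
Qed.

(* FIFO: the pops numbered base .. base + j - 1 match the letters of the block. *)
Lemma queued_pop_sym j c u : queued j c -> u < size (V l) -> ~~ is_push cs u ->
  base j c <= npop cs u < base j c + j -> nth c1 (V l) u = kd.
Proof.
move=> Hqd Hu Hpu Hm; have [Hj Hc _] := Hqd.
have [p [_ Hp Ep <-]] := pop_matches accepts Hu Hpu.
have Hi : npop cs u - base j c < j by lia.
have [_ Hp' _ Ei] := queued_pushed Hqd Hi.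
have -> : p = bpos l kd j c (npop cs u - base j c).
  by apply: (npush_inj Hp Hp'); rewrite Ei Ep; lia.
by have [] := nth_V_bpos kd_sym Hj Hc Hi.
Qed.

Lemma in_block_after j c u jX cX : queued j c -> k <= u -> in_block u jX cX ->
  copy_lt j c jX cX.
Proof.
move=> Hqd Hku [HjX HcX [tX HtX Eu]]; subst u; have [Hj Hc _] := Hqd.
have Hj0 : 0 < j by lia.
have Hj1 : j.-1 < j by lia.
have [Hlast _ _ _] := queued_pushed Hqd Hj1.
apply: (bpos_lt_copy_lt (k := kd) (k' := kd) Hj HjX Hc HcX Hj0 HtX); last first.
  by have [Hfirst _ _ _] := queued_pushed Hqd Hj0; lia.
by case=> Ej Ec; subst jX cX; move: Hlast Hku HtX; rewrite /bpos; lia.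
Qed.

Lemma in_block_npop u u' j c : in_block u j c -> in_block u' j c -> u <= u' ->
  npop cs u' - npop cs u < j.
Proof.
move=> [_ _ [t Ht ->]] [_ _ [t' Ht' ->]] /(npop_leq_sub cs).
by rewrite /bpos; lia.
Qed.

Lemma pop_in_window j c m : queued j c -> base j c <= m < base j c + j ->
  m < npop cs (size (V l)) ->
  exists u jX cX, [/\ k <= u < size (V l), ~~ is_push cs u, npop cs u = m & in_block u jX cX].
Proof.
move=> Hqd Hm /exists_pop [u [Hu Hpu Em]]; have [Hj _ _] := Hqd.
have [_ _ Hk0 E0] := queued_pushed Hqd (ltac:(lia) : 0 < j).
have Hku : k <= u by rewrite leqNgt; apply/negP => /(npop_lt Hpu); lia.
have Hsym : nth c1 (V l) u = kd by apply: (queued_pop_sym Hqd); rewrite ?Em.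
have [jX [cX [tX [HjX HcX HtX Eu]]]] := V_block_sym Hu kd_sym Hsym.
by exists u, jX, cX; split => //; [lia | split => //; exists tX].
Qed.

(* While the block is being popped, every pop reads kd, so every kd' read is a push. *)
Lemma window_push j c a b u : queued j c -> ~~ is_push cs a ->
  npop cs a = base j c -> npop cs b = base j c + j.-1 -> a < u < b ->
  u < size (V l) -> nth c1 (V l) u = kd' -> is_push cs u.
Proof.
move=> Hqd Hpa Ea Eb /andP[Hau Hub] Hus Hsym; apply/negPn/negP => Hpu.
have [Hj _ _] := Hqd; have Hlo := npop_lt Hpa Hau; have Hhi := leq_npop cs (ltnW Hub).
have : nth c1 (V l) u = kd by apply: (queued_pop_sym Hqd) => //; lia.
by rewrite Hsym => E; move: kd_neq; rewrite E eqxx.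
Qed.

Lemma queued_base_lt j1 r1 j2 r2 : queued j1 r1 -> queued j2 r2 -> copy_lt j1 r1 j2 r2 ->
  base j1 r1 + j1 <= base j2 r2.
Proof.
move=> Q1 Q2 H12; have [Hj1 Hr1 _] := Q1; have [Hj2 Hr2 _] := Q2.
have Hlast : j1.-1 < j1 by lia.
have [_ Hp1 _ E1] := queued_pushed Q1 Hlast.
have [_ _ _ E2] := queued_pushed Q2 (ltac:(lia) : 0 < j2).
by have := npush_lt Hp1 (bpos_copy_lt kd kd 0 Hj1 Hj2 Hr1 Hr2 Hlast H12); lia.
Qed.

Lemma queued_base_end j r : queued j r -> base j r + j <= npop cs (size (V l)).
Proof.
move=> Qd; have [Hj _ _] := Qd.
have [Hlast Hp _ E] := queued_pushed Qd (ltac:(lia) : j.-1 < j).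
by rewrite npop_size //; have := npush_lt Hp (leq_trans Hlast k_le); lia.
Qed.

(* a and b pop the first and the last letter of the queued block (j, r) *)
Definition window (j r a b : nat) : Prop :=
  [/\ k <= a <= b, b < size (V l), ~~ is_push cs a,
      npop cs a = base j r & npop cs b = base j r + j.-1].

Lemma queued_window j r : queued j r ->
  exists a b jA cA jB cB, [/\ window j r a b, in_block a jA cA & in_block b jB cB].
Proof.
move=> Qd; have [Hj _ _] := Qd; have Hend := queued_base_end Qd.
have [a [jA [cA [/andP[Ha _] Hpa Ea Ia]]]] :=
  @pop_in_window j r (base j r) Qd ltac:(lia) ltac:(lia).
have [b [jB [cB [/andP[_ Hb] Hpb Eb Ib]]]] :=
  @pop_in_window j r (base j r + j.-1) Qd ltac:(lia) ltac:(lia).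
have Hab : a <= b by apply: leq_of_npop Hpb _; lia.
by exists a, b, jA, cA, jB, cB; split => //; split => //; rewrite Ha.
Qed.

Lemma window_full_copy j r a b jA cA jB cB : queued j r -> window j r a b ->
  in_block a jA cA -> in_block b jB cB -> (jA, cA) <> (jB, cB) ->
  exists jY cY, [/\ 1 <= jY <= l, cY < 2 & forall t, t < jY ->
    a < bpos l kd' jY cY t < b /\ is_push cs (bpos l kd' jY cY t)].
Proof.
move=> Qd [/andP[_ Hab] _ Hpa Ea Eb] [HjA HcA [tA HtA EA]] [HjB HcB [tB HtB EB]] Hne.
have Hab' : a < b.
  rewrite ltn_neqAle Hab andbT; apply/eqP => Eab; apply: Hne.
  have [_] := nth_VT_bpos kd_sym HjA HcA HtA; have [_] := nth_VT_bpos kd_sym HjB HcB HtB.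
  by rewrite -EA -EB Eab => -> [-> ->].
subst a b; have [jY [cY [HjY HcY Hbetween]]] :=
  block_between kd_opp HjA HcA HtA HjB HcB HtB Hne Hab'.
exists jY, cY; split => // t Ht; have Hy := Hbetween t Ht; split => //.
have [Hys Hysym] := nth_V_bpos kd'_sym HjY HcY Ht.
exact: window_push Qd Hpa Ea Eb Hy Hys Hysym.
Qed.

Lemma window_lt j1 r1 j2 r2 a1 b1 a2 b2 : queued j1 r1 -> queued j2 r2 ->
  copy_lt j1 r1 j2 r2 -> window j1 r1 a1 b1 -> window j2 r2 a2 b2 -> b1 < a2.
Proof.
move=> Q1 Q2 H12 [_ _ _ _ Eb1] [_ _ _ Ea2 _]; have [Hj1 _ _] := Q1.
have Hbase := queued_base_lt Q1 Q2 H12.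
by apply: (@ltn_of_npop cs); lia.
Qed.

(* The copies read while popping the earlier block are shorter than it. *)
Lemma first_window_splits j1 r1 j2 r2 a b jA cA jB cB : queued j1 r1 -> queued j2 r2 ->
  copy_lt j1 r1 j2 r2 -> window j1 r1 a b -> in_block a jA cA -> in_block b jB cB ->
  (jA, cA) <> (jB, cB).
Proof.
move=> Q1 Q2 H12 [/andP[Ha Hab] _ _ Ea Eb] Ia Ib [Ej Ec]; subst jB cB.
have LA := in_block_after Q2 Ha Ia; have [_ HcA _] := Ia.
by have := in_block_npop Ia Ib Hab; move: H12 LA; rewrite /copy_lt; lia.
Qed.

(* If a2 and b2 read the same copy, it can only be (j2, 1) with r2 = 0; then b1 reads it
   too, although at least j2 pops separate b1 from b2. *)
Lemma second_window_splits j1 r1 j2 r2 a1 b1 a2 b2 jB1 cB1 jA2 cA2 jB2 cB2 :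
  queued j1 r1 -> queued j2 r2 -> copy_lt j1 r1 j2 r2 -> window j1 r1 a1 b1 ->
  window j2 r2 a2 b2 -> in_block b1 jB1 cB1 -> in_block a2 jA2 cA2 -> in_block b2 jB2 cB2 ->
  (jA2, cA2) <> (jB2, cB2).
Proof.
move=> Q1 Q2 H12 W1 W2 Ib1 Ia2 Ib2 [Ej Ec]; subst jB2 cB2; have [Hj1 _ _] := Q1.
have Hba := window_lt Q1 Q2 H12 W1 W2; have Hbase := queued_base_lt Q1 Q2 H12.
have [/andP[Ha1 Hab1] _ _ _ Eb1] := W1; have [/andP[Ha2 Hab2] _ _ Ea2 Eb2] := W2.
have LB1 := in_block_after Q2 (leq_trans Ha1 Hab1) Ib1.
have LA2 := in_block_after Q2 Ha2 Ia2.
have [HjB1 HcB1 [tB1 HtB1 EB1]] := Ib1; have [HjA2 HcA2 [tA2 HtA2 EA2]] := Ia2.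
have [E|Ne] := eqVneq (jB1, cB1) (jA2, cA2).
  case: E => Ej Ec; subst jB1 cB1.
  have := in_block_npop Ib1 Ib2 (ltnW (leq_trans Hba Hab2)).
  by move: LB1; rewrite /copy_lt; lia.
have L12 : copy_lt jB1 cB1 jA2 cA2.
  apply: (bpos_lt_copy_lt (k := kd) (k' := kd) HjB1 HjA2 HcB1 HcA2 HtB1 HtA2).
    by apply/eqP.
  by rewrite -EB1 -EA2.
by have := in_block_npop Ia2 Ib2 Hab2; move: LB1 L12; rewrite /copy_lt; lia.
Qed.

(* FIFO: a copy pushed after the last letter of a queued block is still in the queue when
   that letter is popped. *)
Lemma full_after_last_pop j r b qb jY cY : queued j r -> queue_at (V l) cs b = Some qb ->
  npop cs b = base j r + j.-1 -> 1 <= jY <= l -> cY < 2 ->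
  (forall t, t < jY -> bpos l kd j r j.-1 < bpos l kd' jY cY t < b /\
     is_push cs (bpos l kd' jY cY t)) ->
  full_block l qb kd' (jY, cY).
Proof.
move=> Qd Hqb Eb HjY HcY HY; apply/full_block_bpos; split => // t /HY [/andP[Hlast Hyb] Hpy].
have [Hj _ _] := Qd.
have [_ Hpl _ El] := queued_pushed Qd (ltac:(lia) : j.-1 < j).
rewrite (mem_queue_at _ Hqb) Hyb Hpy Eb -El /=.
exact: ltnW (npush_lt Hpl Hlast).
Qed.

Lemma queued_pair_full j1 r1 j2 r2 : queued j1 r1 -> queued j2 r2 -> copy_lt j1 r1 j2 r2 ->
  exists k' q', k < k' <= size (V l) /\ queue_at (V l) cs k' = Some q' /\ two_full l q' kd'.
Proof.
move=> Q1 Q2 H12.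
have [a1 [b1 [jA1 [cA1 [jB1 [cB1 [W1 Ia1 Ib1]]]]]]] := queued_window Q1.
have [a2 [b2 [jA2 [cA2 [jB2 [cB2 [W2 Ia2 Ib2]]]]]]] := queued_window Q2.
have [jY1 [cY1 [HjY1 HcY1 Y1]]] :=
  window_full_copy Q1 W1 Ia1 Ib1 (first_window_splits Q1 Q2 H12 W1 Ia1 Ib1).
have [jY2 [cY2 [HjY2 HcY2 Y2]]] :=
  window_full_copy Q2 W2 Ia2 Ib2 (second_window_splits Q1 Q2 H12 W1 W2 Ib1 Ia2 Ib2).
have Hba := window_lt Q1 Q2 H12 W1 W2.
have [/andP[Ha1 Hab1] _ _ _ _] := W1; have [/andP[_ Hab2] Hb2 _ _ Eb2] := W2.
have [Hj2 _ _] := Q2; have [Hlast _ _ _] := queued_pushed Q2 (ltac:(lia) : j2.-1 < j2).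
have [q2 Hq2] := queue_at_defined accepts (ltnW Hb2).
exists b2, q2; split; first by apply/andP; split; [lia | exact: ltnW].
split => //; exists (jY1, cY1), (jY2, cY2); split; last split.
- case=> Ej Ec; subst jY2 cY2.
  by have := Y1 0 ltac:(lia); have := Y2 0 ltac:(lia); lia.
- by apply: (full_after_last_pop Q2 Hq2 Eb2) => // t /Y1 [Hy Hpy]; split => //; lia.
- by apply: (full_after_last_pop Q2 Hq2 Eb2) => // t /Y2 [Hy Hpy]; split => //; lia.
Qed.
End QueuedBlocks.

Theorem lemma12 (l : nat) (cs : seq bool) (kind kind' : sym) :
  1 <= l ->
  accepting (V l) cs ->
  (kind, kind') = (sx, sy) \/ (kind, kind') = (sy, sx) ->
  forall (k : nat) (q : seq nat),
    k <= size (V l) ->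
    queue_at (V l) cs k = Some q ->
    two_full l q kind ->
    exists (k' : nat) (q' : seq nat),
      k < k' <= size (V l) /\ queue_at (V l) cs k' = Some q' /\
      two_full l q' kind'.
Proof.
move=> _ [_ Hacc] Hopp k q Hk Hq [[j1 r1] [[j2 r2] [Hne [F1 F2]]]].
have /full_block_bpos[_ Hj1 Hr1 Hin1] := F1; have /full_block_bpos[_ Hj2 Hr2 Hin2] := F2.
have [H12|H21] := copy_lt_total Hne.
- exact: (queued_pair_full Hopp Hacc Hk Hq (And3 Hj1 Hr1 Hin1) (And3 Hj2 Hr2 Hin2) H12).
- exact: (queued_pair_full Hopp Hacc Hk Hq (And3 Hj2 Hr2 Hin2) (And3 Hj1 Hr1 Hin1) H21).
Qed.
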